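(* Let $\sigma$ be a strongly convex rational polyhedral cone with $\operatorname{ns}(\sigma)>0$. Then there is a unique face $\tau$ of $\sigma$ which is minimal (with respect to inclusion) among the faces $\tau'$ of $\sigma$ satisfying $\operatorname{ns}(\tau')=\operatorname{ns}(\sigma)$.
   Context: For a strongly convex rational polyhedral cone $\sigma\subset\mathbb{R}^n$, $\sigma(1)$ denotes its set of rays (one-dimensional faces) and $\dim\sigma$ the dimension of the linear subspace spanned by $\sigma$. The non-simplicial index of $\sigma$ is $\operatorname{ns}(\sigma)=|\sigma(1)|-\dim\sigma$; thus $\sigma$ is simplicial iff $\operatorname{ns}(\sigma)=0$. *)

(* Cones live in R^n, modelled as row vectors 'rV[R]_n over an
   arbitrary real field R (the paper's case is R = the reals). *)
From HB Require Import structures.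
From mathcomp Require Import all_boot all_order all_algebra.
Set Implicit Arguments. Unset Strict Implicit. Unset Printing Implicit Defensive.
Import Order.TTheory GRing.Theory Num.Theory.
Local Open Scope ring_scope.

Section Cones.
Variables (R : realFieldType) (n : nat).
Local Notation vec := 'rV[R]_n.

Definition vset := vec -> Prop.
Definition vseteq (A B : vset) : Prop := forall v, A v <-> B v.
Definition vsubset (A B : vset) : Prop := forall v, A v -> B v.

Definition dotv (u v : vec) : R := \sum_(j < n) u 0 j * v 0 j.

Definition in_cone (S : seq vec) (v : vec) : Prop :=
  exists c : 'I_(size S) -> R,
    (forall i, 0 <= c i) /\ v = \sum_(i < size S) c i *: S`_i.

Definition rational_vec (v : vec) : Prop :=
  exists q : 'rV[rat]_n, v = map_mx (fun x => ratr x) q.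

Definition rational_polyhedral (C : vset) : Prop :=
  exists S : seq vec, (forall i, (i < size S)%N -> rational_vec S`_i) /\
    vseteq C (in_cone S).

Definition strongly_convex (C : vset) : Prop :=
  forall v, C v -> C (- v) -> v = 0.

Definition is_face (C T : vset) : Prop :=
  exists u : vec, (forall v, C v -> 0 <= dotv u v) /\
    vseteq T (fun v => C v /\ dotv u v = 0).

Definition has_dim (T : vset) (d : nat) : Prop :=
  (exists M : 'M[R]_(d, n), row_free M /\ forall i, T (row i M)) /\
  (forall k (M : 'M[R]_(k, n)), row_free M -> (forall i, T (row i M)) -> (k <= d)%N).

Definition is_ray (C T : vset) : Prop := is_face C T /\ has_dim T 1.

Definition num_rays (C : vset) (k : nat) : Prop :=
  exists f : 'I_k -> vset,
    (forall i, is_ray C (f i)) /\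
    (forall i j, vseteq (f i) (f j) -> i = j) /\
    (forall T, is_ray C T -> exists i, vseteq T (f i)).

Definition ns_is (C : vset) (m : nat) : Prop :=
  exists k d, num_rays C k /\ has_dim C d /\ k = (d + m)%N.

End Cones.

(* Write sigma as the cone over its generators s_i. Its faces are the cones over
   orth u = {i | u . s_i = 0} for u in the dual cone, the rays of such a face are the
   extremal rays of sigma it contains, and by Minkowski's theorem they span it. Choosing
   one generator index per extremal ray gives a set A with
   ns(cone (orth u)) = nullity (A :&: orth u), where nullity X = |X| - rank {s_i | i in X}.
   Nullity is monotone and supermodular, so the index sets of nullity ns(sigma) = nullity A
   are closed under intersection; as orth (u + u') = orth u :&: orth u', so are the faces
   with ns = ns(sigma). Hence the face with the smallest orth u is the unique minimal one. *)

From Pilot Require Import Defs.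
From HB Require Import structures.
From mathcomp Require Import all_boot all_order all_algebra boolp ring zify.
Import Order.TTheory GRing.Theory Num.Theory.
Set Implicit Arguments. Unset Strict Implicit. Unset Printing Implicit Defensive.
Local Open Scope ring_scope.

Lemma exists_gt_affine_lt (R : realFieldType) (a b y : R) :
  0 <= a -> a * y < b -> exists2 t, y < t & a * t < b.
Proof.
move=> a_ge0 ayb; have a1_gt0 : 0 < a + 1 by rewrite ltr_wpDl.
set d := (b - a * y) / (a + 1).
have d_gt0 : 0 < d by rewrite divr_gt0 // subr_gt0.
have bE : b - a * (y + d) = d by rewrite /d; field; rewrite gt_eqF.
by exists (y + d); rewrite ?ltrDl // -subr_gt0 bE.
Qed.

Lemma exists_bound (R : realFieldType) k (f : 'I_k -> R) (a b x0 : R) :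
  0 <= a -> a * x0 < b -> (forall i, a * f i < b) ->
  exists t, a * t < b /\ forall i, f i < t.
Proof.
move=> a_ge0 ax0b afb; set y := \big[Num.max/x0]_i f i.
have ayb : a * y < b.
  rewrite /y; elim/big_ind: _ => // x z axb azb.
  by rewrite maxEle; case: ifP.
have [t yt atb] := exists_gt_affine_lt a_ge0 ayb.
by exists t; split => // i; apply: le_lt_trans yt; apply: le_bigmax.
Qed.

Section Dot.
Variables (R : realFieldType) (n : nat).
Local Notation vec := 'rV[R]_n.
Local Notation dotv := (@dotv R n).

Lemma dotvDr u v w : dotv u (v + w) = dotv u v + dotv u w.
Proof. by rewrite /Defs.dotv -big_split; apply: eq_bigr => j _; rewrite mxE mulrDr. Qed.

Lemma dotvZr u a v : dotv u (a *: v) = a * dotv u v.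
Proof. by rewrite /Defs.dotv mulr_sumr; apply: eq_bigr => j _; rewrite mxE mulrCA. Qed.

Lemma dotvC u v : dotv u v = dotv v u.
Proof. by apply: eq_bigr => j _; rewrite mulrC. Qed.

Lemma dotvDl u v w : dotv (v + w) u = dotv v u + dotv w u.
Proof. by rewrite !(dotvC _ u) dotvDr. Qed.

Lemma dotvZl u a v : dotv (a *: v) u = a * dotv v u.
Proof. by rewrite !(dotvC _ u) dotvZr. Qed.

Lemma dotvBr u v w : dotv u (v - w) = dotv u v - dotv u w.
Proof. by rewrite dotvDr -scaleN1r dotvZr mulN1r. Qed.

Lemma dotvBl u v w : dotv (v - w) u = dotv v u - dotv w u.
Proof. by rewrite !(dotvC _ u) dotvBr. Qed.

Lemma dotv0r u : dotv u 0 = 0.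
Proof. by rewrite -(scale0r 0) dotvZr mul0r. Qed.

Lemma dotv0l u : dotv 0 u = 0.
Proof. by rewrite dotvC dotv0r. Qed.

Lemma dotv_sumr (I : finType) (P : pred I) u (F : I -> vec) :
  dotv u (\sum_(i | P i) F i) = \sum_(i | P i) dotv u (F i).
Proof. by elim/big_rec2: _ => [|i y1 y2 _ <-]; rewrite ?dotv0r ?dotvDr. Qed.

Lemma dotv_self_gt0 v : v != 0 -> 0 < dotv v v.
Proof.
have sq_ge0 j : 0 <= v 0 j * v 0 j by rewrite -expr2 sqr_ge0.
move=> v_neq0; rewrite lt_def sumr_ge0 ?andbT //.
apply: contra v_neq0 => /eqP v2_eq0; apply/eqP/rowP => j; rewrite mxE.
have /(_ j isT) /eqP := psumr_eq0P (fun j _ => sq_ge0 j) v2_eq0.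
by rewrite mulf_eq0 orbb => /eqP.
Qed.

Definition orthproj (w x : vec) := x - (dotv w x / dotv w w) *: w.

Lemma dotv_orthproj w u x : dotv (orthproj w u) x = dotv u (orthproj w x).
Proof.
by rewrite dotvBl dotvBr dotvZl dotvZr (dotvC u w); congr (_ - _); ring.
Qed.

Lemma orthproj_id w : w != 0 -> orthproj w w = 0.
Proof. by move=> w_neq0; rewrite /orthproj divff ?scale1r ?subrr // gt_eqF ?dotv_self_gt0. Qed.

End Dot.

Section Gordan.
Variables (R : realFieldType) (n : nat).
Local Notation vec := 'rV[R]_n.
Local Notation dotv := (@dotv R n).

Definition pointed k (a : 'I_k -> vec) := forall c : 'I_k -> R,
  (forall i, 0 <= c i) -> \sum_i c i *: a i = 0 -> forall i, c i = 0.

Definition cons_coef k (c0 : R) (c : 'I_k -> R) (i : 'I_k.+1) : R :=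
  if unlift ord0 i is Some j then c j else c0.

Lemma sum_cons_coef k c0 (c : 'I_k -> R) (a : 'I_k.+1 -> vec) :
  \sum_i cons_coef c0 c i *: a i = c0 *: a ord0 + \sum_j c j *: a (lift ord0 j).
Proof.
by rewrite big_ord_recl /cons_coef unlift_none; under eq_bigr do rewrite liftK.
Qed.

Lemma cons_coef_ge0 k c0 (c : 'I_k -> R) :
  0 <= c0 -> (forall j, 0 <= c j) -> forall i, 0 <= cons_coef c0 c i.
Proof. by move=> c0_ge0 c_ge0 i; rewrite /cons_coef; case: unlift. Qed.

Lemma pointed_neq0 k (a : 'I_k -> vec) i : pointed a -> a i != 0.
Proof.
move=> a_pt; apply/negP => /eqP ai0.
pose c j : R := (j == i)%:R.
have c_ge0 j : 0 <= c j by rewrite ler0n.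
have sum0 : \sum_j c j *: a j = 0.
  by rewrite (bigD1 i) //= ai0 scaler0 add0r big1 // => j /negbTE ji; rewrite /c ji scale0r.
by have /eqP := a_pt c c_ge0 sum0 i; rewrite /c eqxx oner_eq0.
Qed.

Lemma pointed_behead k (a : 'I_k.+1 -> vec) : pointed a -> pointed (a \o lift ord0).
Proof.
move=> a_pt c c_ge0 sum0 j.
have := a_pt (cons_coef 0 c) (cons_coef_ge0 (lexx 0) c_ge0) _ (lift ord0 j).
by rewrite /cons_coef liftK; apply; rewrite sum_cons_coef scale0r add0r.
Qed.

(* A vanishing nonnegative combination of the sheared vectors is one of [a], with
   weight [\sum_j mu_j * (u . a_(j+1))] on [a ord0]. *)
Lemma pointed_shear k (a : 'I_k.+1 -> vec) u :
  pointed a -> (forall j, 0 < dotv u (a (lift ord0 j))) -> dotv u (a ord0) <= 0 ->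
  pointed (fun j => - dotv u (a ord0) *: a (lift ord0 j) + dotv u (a (lift ord0 j)) *: a ord0).
Proof.
set x := a ord0; set b := a \o lift ord0; set al := - dotv u x.
move=> a_pt ub_gt0 ux_le0 mu mu_ge0 sum0.
pose nu := \sum_j mu j * dotv u (b j).
have al_ge0 : 0 <= al by rewrite oppr_ge0.
have nu_term_ge0 j : 0 <= mu j * dotv u (b j) := mulr_ge0 (mu_ge0 j) (ltW (ub_gt0 j)).
have sum0' : \sum_i cons_coef nu (fun j => al * mu j) i *: a i = 0.
  rewrite sum_cons_coef -[RHS]sum0 scaler_suml -big_split /=.
  by apply: eq_bigr => j _; rewrite scalerDr !scalerA addrC mulrC.
have /(_ ord0) := a_pt _ (cons_coef_ge0 (sumr_ge0 _ (fun j _ => nu_term_ge0 j))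
  (fun j => mulr_ge0 al_ge0 (mu_ge0 j))) sum0'.
rewrite /cons_coef unlift_none => nu0 j.
have /eqP := psumr_eq0P (fun j _ => nu_term_ge0 j) nu0 (i := j) isT.
by rewrite mulf_eq0 (gt_eqF (ub_gt0 j)) orbF => /eqP.
Qed.

Lemma gordan k (a : 'I_k -> vec) : pointed a -> exists u, forall i, 0 < dotv u (a i).
Proof.
elim: k a => [|k IH] a a_pt; first by exists 0; case.
have extend w : 0 < dotv w (a ord0) -> (forall j, 0 < dotv w (a (lift ord0 j))) ->
    forall i, 0 < dotv w (a i).
  by move=> wx wb i; case: (unliftP ord0 i) => [j ->|->].
case: k IH a a_pt extend => [|k] IH a a_pt extend.
  by exists (a ord0); apply: extend => [|[]//]; rewrite dotv_self_gt0 ?pointed_neq0.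
set x := a ord0; set b := a \o lift ord0.
have [u ub_gt0] := IH b (pointed_behead a_pt).
have [ux_gt0|ux_le0] := ltP 0 (dotv u x); first by exists u; apply: extend.
have [v vc_gt0] := IH _ (pointed_shear a_pt ub_gt0 ux_le0).
set al := - dotv u x; have al_ge0 : 0 <= al by rewrite oppr_ge0.
pose l j := - dotv v (b j) / dotv u (b j).
have al_l_lt j : al * l j < dotv v x.
  rewrite /l mulrA ltr_pdivrMr // -subr_gt0 mulrN opprK mulrC.
  by have := vc_gt0 j; rewrite dotvDr !dotvZr addrC mulrC.
have [t [al_t_lt l_lt]] := exists_bound al_ge0 (al_l_lt ord0) al_l_lt.
exists (v + t *: u); apply: extend => [|j].
  by move: al_t_lt; rewrite dotvDl dotvZl -subr_gt0 mulNr opprK mulrC.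
by have := l_lt j; rewrite ltr_pdivrMr // dotvDl dotvZl -subr_gt0 opprK addrC.
Qed.

Lemma gordan_in (I : finType) (D : {pred I}) (a : I -> vec) :
  (forall c : I -> R, (forall i, 0 <= c i) -> \sum_(i in D) c i *: a i = 0 ->
     forall i, i \in D -> c i = 0) ->
  exists u, forall i, i \in D -> 0 < dotv u (a i).
Proof.
move=> D_pt.
have a_pt : pointed (fun k : 'I_#|D| => a (enum_val k)).
  move=> c c_ge0 sum0 k; have Dk := enum_valP k.
  have := D_pt (c \o enum_rank_in Dk) (fun i => c_ge0 _) _ _ Dk.
  rewrite /= enum_valK_in; apply; rewrite big_enum_val -[RHS]sum0.
  by apply: eq_bigr => k' _; rewrite /= enum_valK_in.
have [u u_gt0] := gordan a_pt.
by exists u => i Di; have := u_gt0 (enum_rank_in Di i); rewrite enum_rankK_in.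
Qed.

End Gordan.

Section VectorSets.
Variables (R : realFieldType) (n : nat).
Implicit Types C T : vset R n.

Lemma vseteq_sym C T : vseteq C T -> vseteq T C.
Proof. by move=> CT v; split => /CT. Qed.

Lemma vseteq_trans C T U : vseteq C T -> vseteq T U -> vseteq C U.
Proof. by move=> CT TU v; rewrite CT TU. Qed.

Lemma is_face_eqC C C' T : vseteq C C' -> is_face C T -> is_face C' T.
Proof.
move=> CC' [u [u_ge0 Tu]]; exists u; split => [v /CC'|v]; first exact: u_ge0.
by rewrite Tu CC'.
Qed.

Lemma is_face_eqT C T T' : vseteq T T' -> is_face C T -> is_face C T'.
Proof. by move=> TT' [u [u_ge0 Tu]]; exists u; split => // v; rewrite -TT'. Qed.

Lemma is_face_restrict C C' T : is_face C T -> vsubset C' C -> vsubset T C' -> is_face C' T.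
Proof.
move=> [u [u_ge0 Tu]] C'C TC'; exists u; split => [v /C'C|v]; first exact: u_ge0.
split => [Tv|[C'v uv0]]; first by split; [apply: TC' | case/Tu: Tv].
by apply/Tu; split => //; apply: C'C.
Qed.

Lemma has_dim_eq T T' d : vseteq T T' -> has_dim T d -> has_dim T' d.
Proof.
move=> TT' [[M [M_free MT]] dim_le]; split; first by exists M; split => // i; apply/TT'.
by move=> k M' M'_free M'T'; apply: dim_le M'_free _ => i; apply/TT'.
Qed.

Lemma has_dim_uniq T d1 d2 : has_dim T d1 -> has_dim T d2 -> d1 = d2.
Proof.
move=> [[M1 [M1_free M1T]] le_d1] [[M2 [M2_free M2T]] le_d2].
by apply/eqP; rewrite eqn_leq (le_d2 _ M1) // (le_d1 _ M2).
Qed.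

Lemma num_rays_eqC C C' k : vseteq C C' -> num_rays C k -> num_rays C' k.
Proof.
move=> CC' [f [f_ray [f_inj f_onto]]]; exists f; split.
  by move=> i; have [F D] := f_ray i; split => //; apply: is_face_eqC F.
split=> // T [F D]; apply: f_onto; split => //.
by apply: is_face_eqC F; apply: vseteq_sym.
Qed.

Lemma num_rays_le C k1 k2 : num_rays C k1 -> num_rays C k2 -> (k1 <= k2)%N.
Proof.
move=> [f [f_ray [f_inj _]]] [g [_ [_ g_onto]]].
have [h fgh] := choice (fun a => g_onto _ (f_ray a)).
have h_inj : injective h.
  by move=> a b hab; apply: f_inj => v; rewrite fgh hab -fgh.
by have := leq_card h h_inj; rewrite !card_ord.
Qed.

Lemma num_rays_uniq C k1 k2 : num_rays C k1 -> num_rays C k2 -> k1 = k2.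
Proof. by move=> r1 r2; apply/eqP; rewrite eqn_leq !(num_rays_le r1 r2, num_rays_le r2 r1). Qed.

Lemma ns_is_eqC C C' m : vseteq C C' -> ns_is C m -> ns_is C' m.
Proof.
move=> CC' [k [d [rk [dd km]]]]; exists k, d.
by split; [apply: num_rays_eqC rk | split; first apply: has_dim_eq dd].
Qed.

Definition ray (x : 'rV[R]_n) : vset R n := fun v => exists2 t, 0 <= t & v = t *: x.

Lemma ray_scale t x : 0 < t -> vseteq (ray (t *: x)) (ray x).
Proof.
move=> t_gt0 v; split => [[a a_ge0 ->]|[a a_ge0 ->]].
  by exists (a * t); rewrite ?scalerA // mulr_ge0 // ltW.
by exists (a / t); rewrite ?scalerA ?mulrVK ?unitfE ?gt_eqF // divr_ge0 // ltW.
Qed.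

End VectorSets.

Section IndexCones.
Variables (R : realFieldType) (n : nat) (S : seq 'rV[R]_n).
Local Notation vec := 'rV[R]_n.
Local Notation N := (size S).
Local Notation dotv := (@dotv R n).
Implicit Types X Y Z : {set 'I_N}.

Definition cone X : vset R n := fun v =>
  exists2 c : 'I_N -> R, forall i, 0 <= c i & v = \sum_(i in X) c i *: S`_i.

Definition orth (u : vec) : {set 'I_N} := [set i : 'I_N | dotv u S`_i == 0].

Definition gensmx X : 'M[R]_(N, n) := \matrix_i (if i \in X then S`_i else 0).

Definition rk X := \rank (gensmx X).

Definition nullity X := (#|X| - rk X)%N.

Lemma cone0 X : cone X 0.
Proof. by exists (fun=> 0) => //; rewrite big1 // => i _; rewrite scale0r. Qed.

Lemma coneD X v w : cone X v -> cone X w -> cone X (v + w).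
Proof.
move=> [c c_ge0 ->] [d d_ge0 ->]; exists (c \+ d) => [i|]; first by rewrite addr_ge0.
by rewrite -big_split; apply: eq_bigr => i _; rewrite scalerDl.
Qed.

Lemma coneZ X t v : 0 <= t -> cone X v -> cone X (t *: v).
Proof.
move=> t_ge0 [c c_ge0 ->]; exists (fun i => t * c i) => [i|]; first by rewrite mulr_ge0.
by rewrite scaler_sumr; apply: eq_bigr => i _; rewrite scalerA.
Qed.

Lemma cone_sum X (I : finType) (P : pred I) (F : I -> vec) :
  (forall i, P i -> cone X (F i)) -> cone X (\sum_(i | P i) F i).
Proof. by move=> XF; elim/big_ind: _ => //; [apply: cone0 | apply: coneD]. Qed.

Lemma cone_gen X i : i \in X -> cone X S`_i.
Proof.
move=> Xi; exists (fun j => (j == i)%:R) => [j|]; first by rewrite ler0n.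
rewrite (bigD1 i) //= eqxx scale1r big1 ?addr0 // => j /andP[_ /negbTE ->].
by rewrite scale0r.
Qed.

Lemma cone_trans X Y v : (forall i, i \in X -> cone Y S`_i) -> cone X v -> cone Y v.
Proof. by move=> XY [c c_ge0 ->]; apply: cone_sum => i Xi; apply: coneZ (XY i Xi). Qed.

Lemma cone_subset X Y v : X \subset Y -> cone X v -> cone Y v.
Proof. by move=> /subsetP XY; apply: cone_trans => i /XY; apply: cone_gen. Qed.

Lemma cone_dotv_ge0 X u v :
  (forall i, i \in X -> 0 <= dotv u S`_i) -> cone X v -> 0 <= dotv u v.
Proof.
move=> u_ge0 [c c_ge0 ->]; rewrite dotv_sumr sumr_ge0 // => i Xi.
by rewrite dotvZr mulr_ge0 ?u_ge0.
Qed.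

Lemma cone_orth_dotv u v : cone (orth u) v -> dotv u v = 0.
Proof.
move=> [c _ ->]; rewrite dotv_sumr big1 // => i; rewrite inE => /eqP ui0.
by rewrite dotvZr ui0 mulr0.
Qed.

Lemma cone_orth X u : (forall i, i \in X -> 0 <= dotv u S`_i) ->
  vseteq (fun v => cone X v /\ dotv u v = 0) (cone (X :&: orth u)).
Proof.
move=> u_ge0 v; split; last first.
  by move=> Xuv; split; [apply: cone_subset Xuv; apply: subsetIl | apply: cone_orth_dotv;
    apply: cone_subset Xuv; apply: subsetIr].
move=> [[c c_ge0 vE] uv0]; exists c => //.
have term_ge0 i : i \in X -> 0 <= c i * dotv u S`_i by move=> Xi; rewrite mulr_ge0 ?u_ge0.
have sum0 : \sum_(i in X) c i * dotv u S`_i = 0.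
  by rewrite -[RHS]uv0 vE dotv_sumr; apply: eq_bigr => i _; rewrite dotvZr.
rewrite vE (bigID (mem (orth u))) /= [X in _ + X]big1 ?addr0.
  by apply: eq_bigl => i; rewrite in_setI.
move=> i /andP[Xi]; rewrite inE => /negbTE ui_neq0.
have /eqP := psumr_eq0P term_ge0 sum0 Xi.
by rewrite mulf_eq0 ui_neq0 orbF => /eqP ->; rewrite scale0r.
Qed.

Lemma in_cone_setT : vseteq (in_cone S) (cone setT).
Proof.
have sumT (c : 'I_N -> R) : \sum_i c i *: S`_i = \sum_(i in setT) c i *: S`_i.
  by apply: eq_bigl => i; rewrite in_setT.
by move=> v; split => [[c [c_ge0 ->]]|[c c_ge0 ->]]; exists c; rewrite ?sumT.
Qed.

Lemma ray_cone1 (i : 'I_N) : vseteq (ray S`_i) (cone [set i]).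
Proof.
move=> v; split => [[t t_ge0 ->]|[c c_ge0 ->]]; last by rewrite big_set1; exists (c i).
by apply: coneZ => //; apply: cone_gen; rewrite set11.
Qed.

Lemma gensmx_row X i : row i (gensmx X) = if i \in X then S`_i else 0.
Proof. by rewrite rowK. Qed.

Lemma gen_sub_gensmx X i : i \in X -> (S`_i <= gensmx X)%MS.
Proof. by move=> Xi; have := row_sub i (gensmx X); rewrite gensmx_row Xi. Qed.

Lemma cone_sub_gensmx X v : cone X v -> (v <= gensmx X)%MS.
Proof.
by move=> [c _ ->]; apply: summx_sub => i Xi; apply/scalemx_sub/gen_sub_gensmx.
Qed.

Lemma gensmx_subP X m (B : 'M[R]_(m, n)) :
  (forall i, i \in X -> (S`_i <= B)%MS) -> (gensmx X <= B)%MS.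
Proof.
move=> XB; apply/row_subP => i; rewrite gensmx_row.
by case: ifP => [/XB //|_]; apply: sub0mx.
Qed.

Lemma gensmxS X Y : X \subset Y -> (gensmx X <= gensmx Y)%MS.
Proof. by move=> /subsetP XY; apply: gensmx_subP => i /XY; apply: gen_sub_gensmx. Qed.

Lemma has_dim_cone X : has_dim (cone X) (rk X).
Proof.
split.
  exists (rowsub (maxrankfun (gensmx X)) (gensmx X)); split; first exact: maxrowsub_free.
  by move=> i; rewrite row_rowsub gensmx_row; case: ifP => Xi; [apply: cone_gen | apply: cone0].
move=> k M M_free MX; rewrite -(eqP M_free); apply: mxrankS; apply/row_subP => i.
exact: cone_sub_gensmx.
Qed.

Lemma rk_le_card X : (rk X <= #|X|)%N.
Proof.
pose G := rowsub (fun k : 'I_#|X| => enum_val k) (gensmx X).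
apply: leq_trans (rank_leq_row G); apply: mxrankS; apply: gensmx_subP => i Xi.
by have := row_sub (enum_rank_in Xi i) G; rewrite row_rowsub enum_rankK_in // gensmx_row Xi.
Qed.

Lemma rk_submod X Y : (rk (X :|: Y) + rk (X :&: Y) <= rk X + rk Y)%N.
Proof.
rewrite /rk -(mxrank_sum_cap (gensmx X) (gensmx Y)) leq_add ?mxrankS //.
  apply: gensmx_subP => i; rewrite in_setU => /orP[] Xi.
    exact: submx_trans (gen_sub_gensmx Xi) (addsmxSl _ _).
  exact: submx_trans (gen_sub_gensmx Xi) (addsmxSr _ _).
by rewrite sub_capmx !gensmxS ?subsetIl ?subsetIr.
Qed.

Lemma nullity_mono X Y : X \subset Y -> (nullity X <= nullity Y)%N.
Proof.
move=> XY; have := rk_submod X (Y :\: X); rewrite -{1}(setIidPr XY) setID.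
have := cardsID X Y; rewrite (setIidPr XY).
have := rk_le_card (Y :\: X); have := rk_le_card X; rewrite /nullity; lia.
Qed.

Lemma nullity_supermod X Y :
  (nullity X + nullity Y <= nullity (X :|: Y) + nullity (X :&: Y))%N.
Proof.
have := rk_submod X Y; have := cardsUI X Y.
have := rk_le_card X; have := rk_le_card Y; have := rk_le_card (X :|: Y).
have := rk_le_card (X :&: Y); rewrite /nullity; lia.
Qed.

Lemma nullity_setI X Y Z m : X \subset Z -> Y \subset Z ->
  nullity Z = m -> nullity X = m -> nullity Y = m -> nullity (X :&: Y) = m.
Proof.
move=> XZ YZ nZ nX nY; have := nullity_supermod X Y.
have := nullity_mono (subsetIl X Y).
have : X :|: Y \subset Z by rewrite subUset XZ.
move/nullity_mono; lia.
Qed.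

End IndexCones.

Arguments cone {R n} S X.
Arguments gensmx {R n} S X.
Arguments rk {R n} S X.
Arguments nullity {R n} S X.

Section Rays.
Variables (R : realFieldType) (n : nat) (S : seq 'rV[R]_n).
Local Notation vec := 'rV[R]_n.
Local Notation N := (size S).
Local Notation dotv := (@dotv R n).
Local Notation cone := (cone S).
Local Notation orth := (orth S).
Local Notation rk := (rk S).
Local Notation gensmx := (gensmx S).
Implicit Types X Y : {set 'I_N}.

Definition pos_multiple (x y : vec) := exists2 t, 0 < t & x = t *: y.

Definition extremal X (i : 'I_N) :=
  [&& i \in X, S`_i != 0 & `[< is_face (cone X) (ray S`_i) >]].

Definition first_on_ray (i : 'I_N) :=
  [forall j : 'I_N, (j < i)%N ==> ~~ `[< pos_multiple S`_j S`_i >]].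

(* One index per ray of [cone X]: the least index of a generator spanning it. *)
Definition ray_gens X := [set i | extremal X i && first_on_ray i].

Lemma ray_gens_sub X : ray_gens X \subset X.
Proof. by apply/subsetP => i; rewrite inE => /andP[/and3P[]]. Qed.

Lemma rk_set1 (i : 'I_N) : S`_i != 0 -> rk [set i] = 1%N.
Proof.
move=> si_neq0; have rk_si : \rank S`_i = 1%N by rewrite rank_rV si_neq0.
apply/eqP; rewrite eqn_leq; apply/andP; split.
  apply: leq_trans (eq_leq rk_si); apply: mxrankS.
  by apply: gensmx_subP => j; rewrite inE => /eqP ->.
by apply: leq_trans (eq_leq (esym rk_si)) _; apply/mxrankS/gen_sub_gensmx; rewrite set11.
Qed.

Lemma is_ray_ray_gens X i : i \in ray_gens X -> is_ray (cone X) (ray S`_i).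
Proof.
rewrite inE => /andP[/and3P[_ si_neq0 /asboolP face_i] _]; split => //.
apply: has_dim_eq (vseteq_sym (ray_cone1 i)) _.
by have := has_dim_cone [set i]; rewrite rk_set1.
Qed.

Lemma ray_gens_inj X i j : i \in ray_gens X -> j \in ray_gens X ->
  vseteq (ray S`_i) (ray S`_j) -> i = j.
Proof.
rewrite !inE => /andP[/and3P[_ si_neq0 _] first_i] /andP[/and3P[_ sj_neq0 _] first_j] ij.
have [t t_ge0 siE] : ray S`_j S`_i by apply/ij; exists 1; rewrite ?ler01 ?scale1r.
have t_gt0 : 0 < t.
  by rewrite lt_def t_ge0 andbT; apply: contra si_neq0 => /eqP t0; rewrite siE t0 scale0r.
case: (ltngtP i j) => [lt_ij|lt_ji|/val_inj //].
  by move: first_j => /forallP /(_ i) /implyP /(_ lt_ij) /asboolP; case; exists t.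
move: first_i => /forallP /(_ j) /implyP /(_ lt_ji) /asboolP; case.
by exists t^-1; rewrite ?invr_gt0 // siE scalerA mulVf ?gt_eqF ?scale1r.
Qed.

Lemma ray_gens_rep u j : extremal (orth u) j ->
  exists2 i, i \in ray_gens (orth u) & pos_multiple S`_i S`_j.
Proof.
move=> /and3P[uj sj_neq0 /asboolP face_j].
have jj : `[< pos_multiple S`_j S`_j >] by apply/asboolP; exists 1; rewrite ?ltr01 ?scale1r.
case: (@arg_minnP _ j (fun i : 'I_N => `[< pos_multiple S`_i S`_j >]) val jj).
move=> i /asboolP [t t_gt0 siE] i_min; exists i; last by exists t.
rewrite inE; apply/andP; split.
  apply/and3P; split.
  - by move: uj; rewrite !inE siE dotvZr => /eqP ->; rewrite mulr0.
  - by rewrite siE scaler_eq0 negb_or gt_eqF.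
  - apply/asboolP; apply: is_face_eqT face_j; rewrite siE.
    exact: vseteq_sym (ray_scale _ t_gt0).
apply/forallP => k; apply/implyP => lt_ki; apply/negP => /asboolP [t' t'_gt0 skE].
have : `[< pos_multiple S`_k S`_j >].
  by apply/asboolP; exists (t' * t); rewrite ?mulr_gt0 // skE siE scalerA.
by move/i_min; rewrite leqNgt lt_ki.
Qed.

Hypothesis sigma_pointed : strongly_convex (cone setT).

Lemma gen_scale_ge0 (i j : 'I_N) a : S`_j = a *: S`_i -> S`_i != 0 -> 0 <= a.
Proof.
move=> sjE si_neq0; rewrite leNgt; apply/negP => a_lt0; move/negP: si_neq0; apply.
apply/eqP/sigma_pointed; first by apply: cone_gen; rewrite in_setT.
have -> : - S`_i = - a^-1 *: S`_j by rewrite sjE scalerA mulNr mulVf ?lt_eqF ?scaleN1r.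
by apply: coneZ; [rewrite oppr_ge0 invr_le0 ltW | apply: cone_gen; rewrite in_setT].
Qed.

Lemma cone_rk1 Y : rk Y = 1%N ->
  exists2 i, i \in Y & S`_i != 0 /\ vseteq (cone Y) (ray S`_i).
Proof.
move=> rkY.
have [i /andP[Yi si_neq0]|no_gen] := pickP (fun i => (i \in Y) && (S`_i != 0)); last first.
  have : (gensmx Y <= (0 : 'M_(N, n)))%MS.
    apply: gensmx_subP => j Yj; move: (no_gen j); rewrite Yj => /negbFE /eqP ->.
    exact: sub0mx.
  by move/mxrankS; rewrite mxrank0 -/(rk Y) rkY.
exists i => //; split => //.
have Y_sub_si : (gensmx Y <= S`_i)%MS.
  have [_] := mxrank_leqif_eq (gen_sub_gensmx Yi).
  by rewrite rank_rV si_neq0 -/(rk Y) rkY eqxx => /esym /andP[].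
move=> v; split => [Yv|/ray_cone1]; last by apply: cone_subset; rewrite sub1set.
apply/ray_cone1; apply: cone_trans Yv => j Yj; apply/ray_cone1.
have /sub_rVP [a sjE] := submx_trans (gen_sub_gensmx Yj) Y_sub_si.
by exists a => //; apply: gen_scale_ge0 sjE si_neq0.
Qed.

Lemma ray_of_face u T : is_ray (cone (orth u)) T ->
  exists2 i, i \in ray_gens (orth u) & vseteq T (ray S`_i).
Proof.
move=> [[u' [u'_ge0 Tu']] dimT].
have u'_gen_ge0 i : i \in orth u -> 0 <= dotv u' S`_i by move=> ui; apply/u'_ge0/cone_gen.
set Y := orth u :&: orth u'.
have TY : vseteq T (cone Y) := vseteq_trans Tu' (cone_orth u'_gen_ge0).
have [j Yj [sj_neq0 Yj_ray]] := cone_rk1 (has_dim_uniq (has_dim_cone Y) (has_dim_eq TY dimT)).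
have Tj : vseteq T (ray S`_j) := vseteq_trans TY Yj_ray.
have ext_j : extremal (orth u) j.
  apply/and3P; split => //; first by move: Yj; rewrite in_setI => /andP[].
  by apply/asboolP; apply: is_face_eqT Tj _; exists u'.
have [i Ri [t t_gt0 siE]] := ray_gens_rep ext_j.
by exists i => //; apply: vseteq_trans Tj _; rewrite siE; apply: vseteq_sym (ray_scale _ t_gt0).
Qed.

Lemma num_rays_ray_gens u : num_rays (cone (orth u)) #|ray_gens (orth u)|.
Proof.
exists (fun a : 'I_#|ray_gens (orth u)| => ray S`_(enum_val a)).
split; first by move=> a; apply/is_ray_ray_gens/enum_valP.
split=> [a b ab|T /ray_of_face [i Ri Ti]].
  by apply: enum_val_inj; apply: ray_gens_inj (enum_valP a) (enum_valP b) ab.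
by exists (enum_rank_in Ri i); rewrite enum_rankK_in.
Qed.

End Rays.

Arguments extremal {R n} S X i.
Arguments ray_gens {R n} S X.

Section Minkowski.
Variables (R : realFieldType) (n : nat) (S : seq 'rV[R]_n).
Local Notation vec := 'rV[R]_n.
Local Notation N := (size S).
Local Notation dotv := (@dotv R n).
Local Notation cone := (cone S).
Local Notation orth := (orth S).
Local Notation rk := (rk S).
Local Notation gensmx := (gensmx S).
Local Notation ray_gens := (ray_gens S).
Local Notation extremal := (extremal S).
Implicit Types X M D : {set 'I_N}.

Definition dual (u : vec) := forall i : 'I_N, 0 <= dotv u S`_i.

Lemma min_generating_subset X : exists2 M : {set 'I_N},
  M \subset X /\ (forall l, l \in X -> cone M S`_l) & forall j, j \in M -> ~ cone (M :\ j) S`_j.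
Proof.
pose gen M := (M \subset X) && [forall l in X, `[< cone M S`_l >]].
have genX : gen X by rewrite /gen subxx; apply/forall_inP => l Xl; apply/asboolP/cone_gen.
case: (@arg_minnP _ X gen (fun M => #|M|) genX) => M /andP[MX /forall_inP M_gen] M_min.
exists M => [|j Mj j_red]; first by split => // l /M_gen /asboolP.
have : gen (M :\ j).
  rewrite /gen (subset_trans (subsetDl _ _) MX); apply/forall_inP => l Xl; apply/asboolP.
  apply: cone_trans (asboolP _ (M_gen l Xl)) => i Mi; case: (eqVneq i j) => [->//|ij].
  by apply: cone_gen; rewrite in_setD1 ij.
by move/M_min; rewrite (cardsD1 j M) Mj ltnn.
Qed.

Hypothesis sigma_pointed : strongly_convex (cone setT).

Lemma sum_gens_eq0 D (c : 'I_N -> R) :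
  (forall l, l \in D -> S`_l != 0) -> (forall l, 0 <= c l) ->
  \sum_(l in D) c l *: S`_l = 0 -> forall l, l \in D -> c l = 0.
Proof.
move=> D_neq0 c_ge0 sum0 l Dl; apply/eqP; apply: contraT => cl_neq0.
have cl_gt0 : 0 < c l by rewrite lt_def cl_neq0 c_ge0.
suff sl0 : S`_l = 0 by have := D_neq0 l Dl; rewrite sl0 eqxx.
apply: sigma_pointed; first by apply/cone_gen/in_setT.
move: sum0; rewrite (bigD1 l) //= => /(congr1 (fun x => (c l)^-1 *: x)).
rewrite scaler0 scalerDr scalerA mulVf // scale1r => /eqP; rewrite addr_eq0 => /eqP ->.
rewrite opprK; apply: coneZ; first by rewrite invr_ge0 c_ge0.
by apply: cone_sum => i _; apply/coneZ/cone_gen/in_setT.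
Qed.

(* A combination of the projections vanishes iff the same combination of the generators
   is a multiple of [w]; positive multiples are excluded by [~ cone D w], the others
   because [cone setT] contains no line. *)
Lemma orthproj_gens_pointed D (w : vec) :
  (forall l, l \in D -> S`_l != 0) -> cone setT w -> ~ cone D w ->
  forall c : 'I_N -> R, (forall l, 0 <= c l) ->
  \sum_(l in D) c l *: orthproj w S`_l = 0 -> forall l, l \in D -> c l = 0.
Proof.
move=> D_neq0 sigma_w Dw c c_ge0 sum0; apply: (sum_gens_eq0 D_neq0 c_ge0).
set y := \sum_(l in D) c l *: S`_l.
set be := \sum_(l in D) c l * (dotv w S`_l / dotv w w).
have yE : y = be *: w.
  apply/eqP; rewrite -subr_eq0 -sum0 /y /be scaler_suml -sumrB; apply/eqP.
  by apply: eq_bigr => l _; rewrite /orthproj scalerBr scalerA.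
have Dy : cone D y by apply: cone_sum => l Dl; exact: coneZ (c_ge0 l) (cone_gen Dl).
have [be_gt0|be_le0] := ltP 0 be.
  case: Dw; have -> : w = be^-1 *: y by rewrite yE scalerA mulVf ?gt_eqF ?scale1r.
  by apply: coneZ; rewrite ?invr_ge0 ?ltW.
apply: sigma_pointed; first exact: cone_subset (subsetT _) Dy.
by rewrite yE -scaleNr; apply: coneZ; rewrite ?oppr_ge0.
Qed.

(* Gordan's lemma, applied to the other generators of [M] projected along [S`_j],
   yields a functional vanishing on [S`_j] and positive on the rest of [M]. *)
Lemma extreme_face X M j : M \subset X -> vsubset (cone X) (cone M) ->
  (forall l, l \in M -> S`_l != 0) -> j \in M -> ~ cone (M :\ j) S`_j ->
  is_face (cone X) (ray S`_j).
Proof.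
move=> MX XM M_neq0 Mj j_red.
have D_neq0 l : l \in M :\ j -> S`_l != 0 by rewrite in_setD1 => /andP[_ /M_neq0].
have [v v_gt0] := gordan_in (orthproj_gens_pointed D_neq0 (cone_gen (in_setT j)) j_red).
set u := orthproj S`_j v.
have u_gen l : dotv u S`_l = dotv v (orthproj S`_j S`_l) by apply: dotv_orthproj.
have uj0 : dotv u S`_j = 0 by rewrite u_gen orthproj_id ?dotv0r ?M_neq0.
have u_pos l : l \in M :\ j -> 0 < dotv u S`_l by move=> Dl; rewrite u_gen v_gt0.
have u_ge0 l : l \in M -> 0 <= dotv u S`_l.
  move=> Ml; have [->|lj] := eqVneq l j; first by rewrite uj0.
  by rewrite ltW // u_pos // in_setD1 lj.
exists u; split => [x /XM|x]; first exact: cone_dotv_ge0.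
split => [[t t_ge0 ->]|[/XM Mx ux0]].
  by split; [apply/coneZ/cone_gen/(subsetP MX) | rewrite dotvZr uj0 mulr0].
apply/ray_cone1; apply: cone_subset (proj1 (cone_orth u_ge0 x) (conj Mx ux0)).
apply/subsetP => l; rewrite in_setI inE => /andP[Ml /eqP ul0]; rewrite inE.
by apply: contraT => lj; have := u_pos l; rewrite in_setD1 lj Ml ul0 ltxx => /(_ isT).
Qed.

Lemma gensmx_sub_ray_gens u : (gensmx (orth u) <= gensmx (ray_gens (orth u)))%MS.
Proof.
set X := orth u; have [M [MX X_M] M_red] := min_generating_subset X.
have XM : vsubset (cone X) (cone M) by move=> v; apply: cone_trans.
have M_neq0 l : l \in M -> S`_l != 0.
  by move=> Ml; apply/eqP => sl0; apply: (M_red l Ml); rewrite sl0; apply: cone0.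
apply: gensmx_subP => l Xl; apply: submx_trans (cone_sub_gensmx (X_M l Xl)) _.
apply: gensmx_subP => j Mj.
have ext_j : extremal X j.
  apply/and3P; split; [exact: (subsetP MX) | exact: M_neq0 |].
  by apply/asboolP; apply: extreme_face MX XM M_neq0 Mj (M_red j Mj).
have [i Ri [t t_gt0 siE]] := ray_gens_rep ext_j.
have -> : S`_j = t^-1 *: S`_i by rewrite siE scalerA mulVf ?gt_eqF ?scale1r.
exact/scalemx_sub/gen_sub_gensmx.
Qed.

Lemma rk_ray_gens u : rk (orth u) = rk (ray_gens (orth u)).
Proof. by apply/eqP; rewrite eqn_leq !mxrankS ?gensmx_sub_ray_gens ?gensmxS ?ray_gens_sub. Qed.

End Minkowski.

Section FaceLattice.
Variables (R : realFieldType) (n : nat) (S : seq 'rV[R]_n).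
Local Notation N := (size S).
Local Notation dotv := (@dotv R n).
Local Notation cone := (cone S).
Local Notation orth := (orth S).
Local Notation dual := (dual S).
Local Notation ray_gens := (ray_gens S).
Local Notation nullity := (nullity S).

Lemma orth0 : orth 0 = setT.
Proof. by apply/setP => i; rewrite !inE dotv0l eqxx. Qed.

Lemma dual0 : dual 0.
Proof. by move=> i; rewrite dotv0l. Qed.

Lemma dualD u u' : dual u -> dual u' -> dual (u + u').
Proof. by move=> u_dual u'_dual i; rewrite dotvDl addr_ge0. Qed.

Lemma orthD u u' : dual u -> dual u' -> orth (u + u') = orth u :&: orth u'.
Proof. by move=> u_dual u'_dual; apply/setP => i; rewrite !inE dotvDl paddr_eq0. Qed.

Lemma orth_subset u u' : vsubset (cone (orth u')) (cone (orth u)) -> orth u' \subset orth u.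
Proof.
move=> sub; apply/subsetP => i u'i; rewrite inE; apply/eqP/cone_orth_dotv.
by apply/sub/cone_gen.
Qed.

Lemma is_face_coneP T : is_face (cone setT) T <-> exists2 u, dual u & vseteq T (cone (orth u)).
Proof.
have orthT u : dual u -> vseteq (fun v => cone setT v /\ dotv u v = 0) (cone (orth u)).
  by move=> u_dual; rewrite -[orth u]setTI; apply: cone_orth => i _.
split => [[u [u_ge0 Tu]]|[u u_dual Tu]].
  have u_dual : dual u by move=> i; apply: u_ge0; apply: cone_gen; rewrite in_setT.
  by exists u => //; apply: vseteq_trans Tu (orthT u u_dual).
exists u; split => [v|]; first by apply: cone_dotv_ge0 => i _.
exact: vseteq_trans Tu (vseteq_sym (orthT u u_dual)).
Qed.

(* Perturbing [u'] by a large multiple of [u] makes it positive off [orth u]. *)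
Lemma orth_refine u u' : dual u -> (forall i, i \in orth u -> 0 <= dotv u' S`_i) ->
  exists2 w, dual w & orth w = orth u :&: orth u'.
Proof.
move=> u_dual u'_ge0.
pose l (i : 'I_N) := if dotv u S`_i == 0 then 0 else - dotv u' S`_i / dotv u S`_i.
have lt01 (x : R) : 0 * x < 1 by rewrite mul0r ltr01.
have [t [_ l_lt]] := exists_bound (lexx 0) (lt01 0) (fun i => lt01 (l i)).
have w_orth (i : 'I_N) : dotv u S`_i = 0 -> dotv (u' + t *: u) S`_i = dotv u' S`_i.
  by move=> ui0; rewrite dotvDl dotvZl ui0 mulr0 addr0.
have w_pos (i : 'I_N) : dotv u S`_i != 0 -> 0 < dotv (u' + t *: u) S`_i.
  move=> ui_neq0; have ui_gt0 : 0 < dotv u S`_i by rewrite lt_def ui_neq0 (u_dual i).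
  move: (l_lt i); rewrite /l (negbTE ui_neq0) ltr_pdivrMr // -subr_gt0 opprK.
  by rewrite dotvDl dotvZl addrC.
exists (u' + t *: u) => [i|].
  have [ui0|ui_neq0] := eqVneq (dotv u S`_i) 0; last exact/ltW/w_pos.
  by rewrite w_orth // u'_ge0 // inE ui0.
apply/setP => i; rewrite in_setI !inE.
have [ui0|ui_neq0] := eqVneq (dotv u S`_i) 0; first by rewrite w_orth.
by rewrite gt_eqF ?w_pos.
Qed.

Lemma is_face_orth u T : dual u -> is_face (cone (orth u)) T -> is_face (cone setT) T.
Proof.
move=> u_dual [u' [u'_ge0 Tu']].
have u'_gen_ge0 i : i \in orth u -> 0 <= dotv u' S`_i by move=> ui; apply/u'_ge0/cone_gen.
have [w w_dual orth_w] := orth_refine u_dual u'_gen_ge0.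
apply/is_face_coneP; exists w => //; rewrite orth_w.
exact: vseteq_trans Tu' (cone_orth u'_gen_ge0).
Qed.

Lemma ray_gens_orth u : dual u -> ray_gens (orth u) = ray_gens setT :&: orth u.
Proof.
move=> u_dual; apply/setP => i; rewrite in_setI.
have [ui|ui] := boolP (i \in orth u); last first.
  by rewrite andbF; apply: contraNF ui; apply: (subsetP (ray_gens_sub _)).
have faceE : `[< is_face (cone (orth u)) (ray S`_i) >] = `[< is_face (cone setT) (ray S`_i) >].
  apply: asbool_equiv_eq; split; first exact: is_face_orth.
  move/is_face_restrict; apply => [v|v [t t_ge0 ->]]; first exact: cone_subset (subsetT _).
  exact: coneZ (cone_gen ui).
by rewrite !inE /extremal ui in_setT faceE andbT.
Qed.

Hypothesis sigma_pointed : strongly_convex (cone setT).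

Lemma ns_is_orth u m : dual u ->
  ns_is (cone (orth u)) m <-> nullity (ray_gens setT :&: orth u) = m.
Proof.
move=> u_dual; rewrite -ray_gens_orth // /nullity -rk_ray_gens //.
have rk_le := rk_le_card (ray_gens (orth u)); rewrite -rk_ray_gens // in rk_le.
split => [[k [d [rays_k [dim_d km]]]]|nu].
  rewrite (num_rays_uniq (num_rays_ray_gens sigma_pointed u) rays_k) km.
  by rewrite (has_dim_uniq (has_dim_cone (orth u)) dim_d) addKn.
exists #|ray_gens (orth u)|, (rk S (orth u)); split; first exact: num_rays_ray_gens.
by split; [apply: has_dim_cone | rewrite -nu subnKC].
Qed.

End FaceLattice.

Definition min_ns_face (R : realFieldType) n (sigma tau : vset R n) m :=
  [/\ is_face sigma tau, ns_is tau m &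
      forall tau', is_face sigma tau' -> ns_is tau' m -> vsubset tau' tau -> vseteq tau' tau].

Lemma min_ns_face_eqC (R : realFieldType) n (sigma sigma' tau : vset R n) m :
  vseteq sigma sigma' -> min_ns_face sigma tau m -> min_ns_face sigma' tau m.
Proof.
move=> ss' [face_tau ns_tau tau_min]; split => [||tau' /(is_face_eqC (vseteq_sym ss'))].
- exact: is_face_eqC face_tau.
- exact: ns_tau.
- exact: tau_min.
Qed.

Section MinimalFace.
Variables (R : realFieldType) (n : nat) (S : seq 'rV[R]_n) (m : nat).
Local Notation cone := (cone S).
Local Notation orth := (orth S).
Local Notation dual := (dual S).
Local Notation nullity := (nullity S).
Local Notation A := (ray_gens S setT).
Hypotheses (sigma_pointed : strongly_convex (cone setT)) (ns_sigma : ns_is (cone setT) m).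

Lemma nullity_ray_gens : nullity A = m.
Proof.
have := ns_sigma; rewrite -orth0 => /(ns_is_orth sigma_pointed m (@dual0 _ _ S)).
by rewrite orth0 setIT.
Qed.

Lemma ns_is_orthD u u' : dual u -> dual u' ->
  ns_is (cone (orth u)) m -> ns_is (cone (orth u')) m -> ns_is (cone (orth (u + u'))) m.
Proof.
move=> u_dual u'_dual /(ns_is_orth sigma_pointed m u_dual) nu.
move=> /(ns_is_orth sigma_pointed m u'_dual) nu'.
apply/(ns_is_orth sigma_pointed m (dualD u_dual u'_dual)).
rewrite orthD // -[A]setIid -setIACA.
exact: nullity_setI (subsetIl A _) (subsetIl A _) nullity_ray_gens nu nu'.
Qed.

Lemma exists_min_ns_face : exists tau, min_ns_face (cone setT) tau m.
Proof.
pose good k := `[< exists2 u, dual u & ns_is (cone (orth u)) m /\ #|orth u| = k >].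
have : exists k, good k.
  by exists #|orth 0|; apply/asboolP; exists 0; rewrite ?orth0 //; apply: dual0.
case/ex_minnP => _ /asboolP [u u_dual [ns_u <-]] u_min.
exists (cone (orth u)); split => //; first by apply/is_face_coneP; exists u.
move=> tau' /is_face_coneP [u' u'_dual tau'E] ns_tau' tau'_sub.
have ns_u' : ns_is (cone (orth u')) m := ns_is_eqC tau'E ns_tau'.
have sub : orth u' \subset orth u by apply: orth_subset => v /tau'E /tau'_sub.
have -> : orth u = orth u'.
  by apply/esym/eqP; rewrite eqEcard sub u_min //; apply/asboolP; exists u'.
exact: tau'E.
Qed.

Lemma min_ns_face_uniq tau tau' :
  min_ns_face (cone setT) tau m -> min_ns_face (cone setT) tau' m -> vseteq tau' tau.
Proof.
move=> [/is_face_coneP [u u_dual tauE] ns_tau tau_min].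
move=> [/is_face_coneP [u' u'_dual tau'E] ns_tau' tau'_min].
have ns_uu' : ns_is (cone (orth (u + u'))) m.
  by apply: ns_is_orthD => //; [apply: ns_is_eqC tauE ns_tau | apply: ns_is_eqC tau'E ns_tau'].
have face_uu' : is_face (cone setT) (cone (orth (u + u'))).
  by apply/is_face_coneP; exists (u + u') => //; apply: dualD.
have sub_tau : vsubset (cone (orth (u + u'))) tau.
  by move=> v; rewrite orthD // => /(cone_subset (subsetIl _ _)) /tauE.
have sub_tau' : vsubset (cone (orth (u + u'))) tau'.
  by move=> v; rewrite orthD // => /(cone_subset (subsetIr _ _)) /tau'E.
apply: vseteq_trans (vseteq_sym (tau'_min _ face_uu' ns_uu' sub_tau')) _.
exact: tau_min _ face_uu' ns_uu' sub_tau.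
Qed.

End MinimalFace.

Theorem lemma3p2 (R : realFieldType) (n : nat) (sigma : vset R n) (m : nat) :
  rational_polyhedral sigma -> strongly_convex sigma ->
  ns_is sigma m -> (0 < m)%N ->
  exists tau : vset R n,
    (is_face sigma tau /\ ns_is tau m /\
     (forall tau', is_face sigma tau' -> ns_is tau' m ->
        vsubset tau' tau -> vseteq tau' tau)) /\
    (forall tau'', is_face sigma tau'' -> ns_is tau'' m ->
       (forall tau', is_face sigma tau' -> ns_is tau' m ->
          vsubset tau' tau'' -> vseteq tau' tau'') ->
       vseteq tau'' tau).
Proof.
move=> [S [_ sigmaE]] sigma_pointed ns_sigma _.
have coneE : vseteq (cone S setT) sigma := vseteq_sym (vseteq_trans sigmaE (in_cone_setT S)).
have cone_pointed : strongly_convex (cone S setT).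
  by move=> v /coneE + /coneE; apply: sigma_pointed.
have ns_cone := ns_is_eqC (vseteq_sym coneE) ns_sigma.
have [tau min_tau] := exists_min_ns_face ns_cone.
have [face_tau ns_tau tau_min] := min_ns_face_eqC coneE min_tau.
exists tau; split=> [|tau'' face'' ns'' min''] //.
apply: (min_ns_face_uniq cone_pointed ns_cone min_tau).
by apply: min_ns_face_eqC (vseteq_sym coneE) _; split.
Qed.
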